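(* Define integers $a(n)$ by $\sum_{n\ge0}a(n)q^n=\frac{f_1f_6}{f_2^2f_3}$. Then for all $n\geq 0$, $a(24n+13)\equiv 0\pmod 2$.
   Context: For a positive integer $r$, $f_r=\prod_{k\geq1}(1-q^{rk})$, a formal power series in $q$. *)

(* Formal power series over int are represented as
   coefficient sequences nat -> int with the Cauchy product. *)
From mathcomp Require Import all_boot all_algebra.
Set Implicit Arguments. Unset Strict Implicit. Unset Printing Implicit Defensive.
Import GRing.Theory.
Local Open Scope ring_scope.

Definition smul (a b : nat -> int) : nat -> int :=
  fun n => \sum_(i < n.+1) a i * b (n - i)%N.

(* f_r = prod_{k>=1} (1 - q^{r k}); its n-th coefficient equals the n-th
   coefficient of the finite product over 1 <= k <= n+1 (the remaining
   factors are 1 + O(q^{r k}) with r k > n when r >= 1). *)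
Definition fr (r : nat) : nat -> int :=
  fun n => (\prod_(k < n.+1) (1 - 'X^(r * k.+1)%N) : {poly int})`_n.

From mathcomp Require Import all_boot all_algebra.
From mathcomp Require Import zify ring.
Set Implicit Arguments. Unset Strict Implicit. Unset Printing Implicit Defensive.
Import GRing.Theory.

(** Work in F_2[q] modulo q^N.  There f_2 = f_1^2 and f_6 = f_3^2, so the
  hypothesis reads a f_1^3 = f_3, i.e. a f_4 = f_1 f_3, and Euler's pentagonal
  theorem gives f_r = E(q^r) with E = sum_{(x,6)=1} q^((x^2-1)/24).
  Coefficients of products E(q^r) E(q^s) count, mod 2, representations by the
  forms X^2 + 3Y^2 and x^2 + 2y^2; involutions of these representations give
  [E(q) E(q^3)]_(4m+1) = [E(q^3) E(q^4)]_m and [E(q) E(q^2)]_(3m) = [E(q)]_m.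
  The first turns a f_4 = f_1 f_3 into sum_m a(4m+1) q^m = E(q^3) E(q)^3, the
  second then gives sum_m a(12m+1) q^m = E(q)^2 = E(q^2), which has only even
  powers of q; hence a(24n+13) = a(12(2n+1)+1) is even. *)

Section Polynomials.
Local Open Scope ring_scope.
Variable R : comNzRingType.
Implicit Types p q u : {poly R}.

Definition eqmodXn N p q := forall i, (i < N)%N -> p`_i = q`_i.

Lemma eqmodXn_refl N p : eqmodXn N p p.
Proof. by []. Qed.

Lemma eqmodXn_sym N p q : eqmodXn N p q -> eqmodXn N q p.
Proof. by move=> h i /h. Qed.

Lemma eqmodXn_trans N p q r : eqmodXn N p q -> eqmodXn N q r -> eqmodXn N p r.
Proof. by move=> h1 h2 i hi; rewrite h1 // h2. Qed.

Lemma eqmodXnW N M p q : (M <= N)%N -> eqmodXn N p q -> eqmodXn M p q.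
Proof. by move=> hM h i hi; apply: h; apply: leq_trans hM. Qed.

Lemma eqmodXnM N p q p' q' :
  eqmodXn N p p' -> eqmodXn N q q' -> eqmodXn N (p * q) (p' * q').
Proof.
move=> h1 h2 i hi; rewrite !coefM; apply: eq_bigr => j _.
by rewrite h1 ?h2 //; apply: leq_ltn_trans hi; rewrite ?leq_subr // -ltnS.
Qed.

Lemma eqmodXn_comp N r p q :
  (0 < r)%N -> eqmodXn N p q -> eqmodXn N (p \Po 'X^r) (q \Po 'X^r).
Proof.
move=> hr h i hi; rewrite !coef_comp_poly_Xn //; case: ifP => // _.
by apply: h; apply: leq_ltn_trans hi; apply: leq_div.
Qed.

Lemma eqmodXn_mul2r N p q u :
  u`_0 = 1 -> eqmodXn N (p * u) (q * u) -> eqmodXn N p q.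
Proof.
move=> u0; elim: N => [|N IH] h; first by [].
have h' : eqmodXn N p q by apply: IH; apply: eqmodXnW h.
move=> i; rewrite ltnS leq_eqVlt => /orP [/eqP ->|]; last exact: h'.
have := h N (ltnSn N); rewrite !coefM !big_ord_recr /= subnn u0 !mulr1.
by under eq_bigr => j _ do rewrite h' //; move/addrI.
Qed.

Lemma coefM_1subXn p e i : (i < e)%N -> (p * (1 - 'X^e))`_i = p`_i.
Proof. by move=> hi; rewrite mulrBr mulr1 coefB coefMXn hi subr0. Qed.

Definition dissect m r p : {poly R} := \poly_(i < size p) p`_(m * i + r).

Lemma coef_dissect m r p i : (0 < m)%N -> (dissect m r p)`_i = p`_(m * i + r).
Proof.
move=> hm; rewrite coef_poly; case: ltnP => // hi.
by rewrite nth_default //; apply: leq_trans hi _; nia.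
Qed.

Lemma coefM_comp_Xn m r p q i : (r < m)%N ->
  (p * (q \Po 'X^m))`_(m * i + r) = (dissect m r p * q)`_i.
Proof.
move=> hr; have hm : (0 < m)%N by apply: leq_ltn_trans hr.
elim/poly_ind: q i => [|q c IH] i; first by rewrite comp_poly0 !mulr0 !coef0.
rewrite comp_polyD comp_polyM comp_polyX comp_polyC !mulrDr !mulrA !coefD.
rewrite coefMXn coefMX !coefMC coef_dissect //.
case: i => [|i]; first by rewrite muln0 add0n hr.
by rewrite /= -IH ifF; [congr (_`_ _ + _); lia | lia].
Qed.

Lemma mul_sum_Xn (I J : finType) (P : pred I) (Q : pred J) (f : I -> nat) (g : J -> nat) :
  (\sum_(i | P i) 'X^(f i) : {poly R}) * (\sum_(j | Q j) 'X^(g j)) =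
  \sum_(z : I * J | P z.1 && Q z.2) 'X^(f z.1 + g z.2).
Proof.
rewrite big_distrl /=; under eq_bigr do rewrite big_distrr /=.
by rewrite (pair_big_dep P (fun _ => Q)) /=; apply: eq_bigr => z _; rewrite exprD.
Qed.

End Polynomials.

Lemma odd_card_involution (T : finType) (A : {set T}) (g : T -> T) :
  {in A, forall x, g x \in A} -> {in A, forall x, g (g x) = x} ->
  odd #|A| = odd #|[set x in A | g x == x]|.
Proof.
move: {2}#|A| (leqnn #|A|) => n; elim: n A => [|n IH] A hn gA gK.
  move: hn; rewrite leqn0 cards_eq0 => /eqP ->.
  by congr (odd _); apply: eq_card => x; rewrite !inE.
case: (pickP [pred x in A | g x != x]) => [x /andP[xA gx] | none]; last first.
  congr (odd _); apply: eq_card => y; rewrite !inE.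
  by case yA: (y \in A) => //=; have := none y; rewrite /= yA /= => /negbFE ->.
set A' := A :\: [set x; g x].
have sub : [set x; g x] \subset A.
  by apply/subsetP => y; rewrite !inE => /orP[] /eqP ->; rewrite ?gA.
have cA : #|A| = (#|A'| + 2)%N.
  rewrite /A' cardsD (setIidPr sub) cards2 eq_sym gx.
  by have := subset_leq_card sub; rewrite cards2 eq_sym gx; lia.
have gA' : {in A', forall y, g y \in A'}.
  move=> y; rewrite !inE => /andP[/norP[yx ygx] yA]; rewrite gA // andbT.
  apply/norP; split; first by apply: contra ygx => /eqP <-; rewrite gK.
  by apply: contra yx => /eqP h; rewrite -(gK y yA) h gK.
have gK' : {in A', forall y, g (g y) = y} by move=> y /setDP[yA _]; apply: gK.
rewrite cA oddD /= addbF (IH A' _ gA' gK'); last by move: hn; rewrite cA; lia.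
congr (odd _); apply: eq_card => y; rewrite !inE.
case: (boolP (g y == y)) => fy; rewrite ?andbF ?andbT //.
case: (y =P x) => [yx | _]; first by move: fy; rewrite yx (negbTE gx).
case: (y =P g x) => [yg | _] //=.
by move: fy; rewrite yg gK // => /eqP h; rewrite -h eqxx in gx.
Qed.

Lemma odd_card_involution_ord2 (b : nat) (P : nat -> nat -> bool) (h : nat -> nat -> nat * nat) :
  (forall x y, P x y -> [/\ ((h x y).1 < b)%N, ((h x y).2 < b)%N,
      P (h x y).1 (h x y).2 & h (h x y).1 (h x y).2 = (x, y)]) ->
  odd #|[set z : 'I_b * 'I_b | P z.1 z.2]| =
  odd #|[set z : 'I_b * 'I_b | P z.1 z.2 && (h z.1 z.2 == (val z.1, val z.2))]|.
Proof.
move=> hP; case: b hP => [|b] hP.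
  by congr (odd _); apply: eq_card => -[[]].
pose g (z : 'I_b.+1 * 'I_b.+1) := (inord (h z.1 z.2).1, inord (h z.1 z.2).2) : 'I_b.+1 * 'I_b.+1.
have gE (z : 'I_b.+1 * 'I_b.+1) : P z.1 z.2 -> ((val (g z).1, val (g z).2) = h z.1 z.2).
  by move=> /hP[h1 h2 _ _]; rewrite /= !inordK //; case: (h _ _).
rewrite (@odd_card_involution _ _ g).
- congr (odd _); apply: eq_card => z; rewrite !inE.
  case Pz: (P z.1 z.2) => //=; rewrite -(gE z Pz).
  case: (g z) => g1 g2; case: z {Pz} => z1 z2 /=.
  by apply/eqP/eqP => [[-> ->] | [/val_inj -> /val_inj ->]].
- move=> z; rewrite !inE => Pz; have [_ _ + _] := hP _ _ Pz.
  by rewrite -(gE z Pz).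
- move=> z; rewrite !inE => Pz; have [_ _ Pg hK] := hP _ _ Pz.
  rewrite -(gE z Pz) in Pg hK; have := gE _ Pg; rewrite hK => -[e1 e2].
  by case: z {Pz Pg hK} e1 e2 => z1 z2 e1 e2; congr pair; apply: val_inj.
Qed.

Section CharTwo.
Local Open Scope ring_scope.

Lemma pchar2_polyF2 : 2 \in [pchar {poly 'F_2}].
Proof. by rewrite pchar_poly pchar_Fp. Qed.

Lemma natrF2 k : (k%:R : 'F_2) = (odd k)%:R.
Proof. by rewrite -Fp_nat_mod // modn2. Qed.

Lemma intrF2_eq0 (z : int) : (z%:~R : 'F_2) = 0 -> (2 %| z)%Z.
Proof.
have natF2_eq0 k : (k%:R : 'F_2) = 0 -> ~~ odd k by rewrite natrF2; case: (odd k).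
rewrite dvdzE; case: z => k; first by rewrite pmulrn => /natF2_eq0; rewrite dvdn2.
rewrite NegzE mulrNz pmulrn => /eqP; rewrite oppr_eq0 => /eqP /natF2_eq0.
by rewrite abszN /= dvdn2.
Qed.

Lemma coef_sum_XnF2 (I : finType) (P : pred I) (f : I -> nat) m :
  (\sum_(i | P i) 'X^(f i) : {poly 'F_2})`_m = (odd #|[set i | P i & f i == m]|)%:R.
Proof.
rewrite -natrF2 coef_sum -sum1_card natr_sum.
rewrite (eq_bigl (fun i => P i && (f i == m))) => [|i]; last by rewrite inE.
rewrite big_mkcondr /=; apply: eq_bigr => i _.
by rewrite coefXn eq_sym; case: (f i == m).
Qed.

End CharTwo.

Fixpoint tri k := if k is k'.+1 then (tri k' + k)%N else 0%N.

Lemma tri2 k : (2 * tri k = k * k.+1)%N.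
Proof. by elim: k => //= k IH; lia. Qed.

Definition pentp j := (j * j + tri j)%N.
Definition pentm j := (tri j + j * j.-1)%N.

Section FinitePentagonal.
Local Open Scope ring_scope.

(* The sum over k of pent_summand n k telescopes in n (pent_summandS); its
   k = 0 term is prod_(i <= n) (1 + q^i) and all other terms have degree > n. *)
Definition pent_summand n k : {poly 'F_2} :=
  'X^(k * n + tri k) * \prod_(k.+1 <= i < n.+1) (1 + 'X^i).
Definition pent_telescoper n k : {poly 'F_2} :=
  'X^(tri k + k * n) * \prod_(k <= i < n.+1) (1 + 'X^i).

Lemma pent_summandS n k : (k <= n)%N ->
  pent_summand n.+1 k + pent_summand n k = pent_telescoper n k + pent_telescoper n k.+1.
Proof.
move=> hk; rewrite /pent_summand /pent_telescoper big_nat_recr /= ?ltnS //.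
rewrite (@big_ltn _ _ _ k) ?ltnS //.
have e1 : (k * n.+1 + tri k = (tri k + k * n) + k)%N by lia.
have e2 : (tri k.+1 + k.+1 * n = (tri k + k * n) + k + n.+1)%N by rewrite /=; lia.
have e3 : (k * n + tri k = tri k + k * n)%N by lia.
by rewrite e1 e2 e3 !exprD; ring.
Qed.

Lemma finite_pentagonalF2 n : \sum_(k < n.+1) pent_summand n k =
  1 + \sum_(1 <= j < n.+1) ('X^(pentp j) + 'X^(pentm j)).
Proof.
elim: n => [|n IH].
  by rewrite big_ord1 /pent_summand big_geq // big_geq // mulr1 addr0.
rewrite big_ord_recr /=.
have -> : \sum_(k < n.+1) pent_summand n.+1 k = \sum_(k < n.+1) pent_summand n k +
    \sum_(k < n.+1) (pent_telescoper n k.+1 - pent_telescoper n k).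
  rewrite -big_split /=; apply: eq_bigr => k _.
  rewrite (oppr_pchar2 pchar2_polyF2) [_ + pent_telescoper n k]addrC.
  rewrite -pent_summandS; last by rewrite -ltnS.
  by rewrite addrCA (addrr_pchar2 pchar2_polyF2) addr0.
have tele := telescope_sumr (fun k => pent_telescoper n k) (leq0n n.+1).
rewrite big_mkord in tele; rewrite {}tele IH.
have -> : pent_telescoper n 0 = 0.
  by rewrite /pent_telescoper big_ltn // expr0 (addrr_pchar2 pchar2_polyF2) mul0r mulr0.
rewrite /pent_summand /pent_telescoper !(big_geq (idx := 1)) // subr0 !mulr1.
by rewrite [in RHS]big_nat_recr //= /pentp /pentm /=; ring.
Qed.

End FinitePentagonal.

(* For x = 6j - 1, resp. 6j + 1, this is the generalized pentagonal number
   pentm j, resp. pentp j. *)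
Definition gpent x := ((x ^ 2 - 1) %/ 24)%N.

Lemma gpent_eq x y : (x ^ 2 = 24 * y + 1)%N -> gpent x = y.
Proof. by move=> h; rewrite /gpent h addnK mulKn. Qed.

Section EulerPentagonal.
Local Open Scope ring_scope.

Definition pentser B r : {poly 'F_2} := \sum_(x < B | coprime x 6) 'X^(r * gpent x).

Lemma pentser_finite n :
  pentser (6 * n + 2) 1 = 1 + \sum_(1 <= j < n.+1) ('X^(pentp j) + 'X^(pentm j)).
Proof.
rewrite /pentser -(big_mkord (fun x => coprime x 6) (fun x => 'X^(1 * gpent x))).
rewrite big_mkcond /=.
have coprime6_mulD m k : coprime (6 * m + k) 6 = coprime k 6.
  by rewrite -coprime_modl mulnC modnMDl coprime_modl.
elim: n => [|n IH].
  rewrite [in RHS]big_geq // addr0 big_nat_recr //= big_nat_recr //= big_geq //.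
  by rewrite !add0r (_ : gpent 1 = 0%N) // expr0.
have -> : (6 * n.+1 + 2 = (6 * n + 2).+4.+2)%N by lia.
do 6! rewrite [in LHS]big_nat_recr //=.
rewrite IH [in RHS]big_nat_recr //= -!addnS !coprime6_mulD /= !addr0 !mul1n.
have -> : gpent (6 * n + 5) = pentm n.+1.
  by apply: gpent_eq; rewrite /pentm /=; have := tri2 n.+1; rewrite /=; nia.
have -> : gpent (6 * n + 7) = pentp n.+1.
  by apply: gpent_eq; rewrite /pentp /=; have := tri2 n.+1; rewrite /=; nia.
by rewrite -!addrA; congr (_ + (_ + _)); exact: addrC.
Qed.

Lemma euler_pentagonalF2 n :
  eqmodXn n.+1 (\prod_(k < n) (1 - 'X^(k.+1))) (pentser (6 * n + 2) 1).
Proof.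
rewrite pentser_finite -finite_pentagonalF2 big_ord_recl => i hi.
rewrite coefD coef_sum [X in _ = _ + X]big1 ?addr0; last first.
  by move=> k _; rewrite /pent_summand coefXnM ifT //= /bump /=; lia.
rewrite /pent_summand /= mul0n add0n expr0 mul1r big_add1 /= big_mkord.
by under eq_bigr => k _ do rewrite (oppr_pchar2 pchar2_polyF2).
Qed.

End EulerPentagonal.

Lemma coprime6E x : coprime x 6 = odd x && ~~ (3 %| x).
Proof.
rewrite (_ : 6 = 2 * 3) // coprimeMr coprimen2; congr (_ && _).
by rewrite coprime_sym prime_coprime.
Qed.

Lemma sqr_mod8 x : x ^ 2 %% 8 = if odd x then 1 else if x %% 4 == 2 then 4 else 0.
Proof.
have -> : odd x = odd (x %% 8) by lia.
have -> : (x %% 4 == 2) = (x %% 8 %% 4 == 2) by lia.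
rewrite -modnXm; have : x %% 8 < 8 by rewrite ltn_pmod.
by move: (x %% 8) => r; do 8! case: r => [|r] //.
Qed.

Lemma sqr_mod3 x : x ^ 2 %% 3 = if 3 %| x then 0 else 1.
Proof.
have -> : (3 %| x) = (3 %| x %% 3) by lia.
rewrite -modnXm; have : x %% 3 < 3 by rewrite ltn_pmod.
by move: (x %% 3) => r; do 3! case: r => [|r] //.
Qed.

Lemma sqr_coprime6 x : coprime x 6 -> x ^ 2 = 24 * gpent x + 1.
Proof.
have h24 : coprime x 6 -> x ^ 2 %% 24 = 1.
  rewrite coprime6E.
  have -> : odd x && ~~ (3 %| x) = odd (x %% 24) && ~~ (3 %| x %% 24) by lia.
  rewrite -modnXm; have : x %% 24 < 24 by rewrite ltn_pmod.
  by move: (x %% 24) => r; do 24! case: r => [|r] //.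
by move=> /h24 h; rewrite /gpent {1 2}(divn_eq (x ^ 2) 24) h addnK mulnK // mulnC.
Qed.

(* Up to signs, multiplication of x + y sqrt(-2) by (1 +- 2 sqrt(-2))/3, the
   sign being chosen so that the division by 3 is exact. *)
Definition flip2 x y :=
  if 3 %| x + 2 * y then (`|4 * y - x| %/ 3, (2 * x + y) %/ 3)
  else ((4 * y + x) %/ 3, `|y - 2 * x| %/ 3).

Lemma flip2E x y : ~~ (3 %| x) -> ~~ (3 %| y) ->
  if 3 %| x + 2 * y then 3 * (flip2 x y).1 = `|4 * y - x| /\ 3 * (flip2 x y).2 = 2 * x + y
  else 3 * (flip2 x y).1 = 4 * y + x /\ 3 * (flip2 x y).2 = `|y - 2 * x|.
Proof. by move=> hx hy; case: ifP => d; rewrite /flip2 d /=; split; lia. Qed.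

Lemma flip2_norm x y : ~~ (3 %| x) -> ~~ (3 %| y) ->
  (flip2 x y).1 ^ 2 + 2 * (flip2 x y).2 ^ 2 = x ^ 2 + 2 * y ^ 2.
Proof. by move=> hx hy; have := flip2E hx hy; case: ifP => _ [] /=; nia. Qed.

Lemma flip2K x y : ~~ (3 %| x) -> ~~ (3 %| y) ->
    ~~ (3 %| (flip2 x y).1) -> ~~ (3 %| (flip2 x y).2) ->
  flip2 (flip2 x y).1 (flip2 x y).2 = (x, y).
Proof.
move=> hx hy hu hv; have := flip2E hu hv; have := flip2E hx hy.
case: (flip2 x y) hu hv => u v /= hu hv.
case: (flip2 u v) => u' v' /=.
by case: ifP => d [] eu ev; case: ifP => d' [] eu' ev'; congr pair; lia.
Qed.

Lemma flip2_fix x y : odd x -> ~~ (3 %| x) -> ~~ (3 %| y) ->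
  (flip2 x y == (x, y)) = (x == y).
Proof.
move=> ox hx hy; have := flip2E hx hy; case: (flip2 x y) => u v /=.
by case: ifP => d [] eu ev; apply/eqP/eqP => [[e1 e2] | exy]; try congr pair; lia.
Qed.

Definition rep2 M x y := [&& coprime x 6, coprime y 6 & x ^ 2 + 2 * y ^ 2 == M].

Lemma rep2_coprime6 m x y : x ^ 2 + 2 * y ^ 2 = 72 * m + 3 -> coprime x 6 && coprime y 6.
Proof.
move=> hM; rewrite !coprime6E.
have h9 z : 3 %| z -> 9 %| z ^ 2 by move=> h; rewrite (_ : 9 = 3 ^ 2) // dvdn_exp2r.
move: (sqr_mod8 x) (sqr_mod8 y) (sqr_mod3 x) (sqr_mod3 y) (h9 x) (h9 y).
by case: (odd x) (odd y) (x %% 4 == 2) (y %% 4 == 2) (3 %| x) (3 %| y) => [] [] [] [] [] [] /=; lia.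
Qed.

Lemma flip2_rep2 m x y : rep2 (72 * m + 3) x y ->
  rep2 (72 * m + 3) (flip2 x y).1 (flip2 x y).2 /\ flip2 (flip2 x y).1 (flip2 x y).2 = (x, y).
Proof.
move=> /and3P[cx cy /eqP hM]; move: (cx) (cy); rewrite !coprime6E => /andP[_ hx] /andP[_ hy].
have hM' := flip2_norm hx hy; rewrite hM in hM'.
have /andP[cu cv] := rep2_coprime6 hM'.
split; first by rewrite /rep2 cu cv hM' eqxx.
by apply: flip2K => //; [move: cu | move: cv]; rewrite coprime6E => /andP[].
Qed.

Lemma rep2_bound b M x y : M < b ^ 2 -> rep2 M x y -> x < b /\ y < b.
Proof. by move=> hb /and3P[_ _ /eqP h]; split; rewrite -(@ltn_exp2r _ _ 2) //; lia. Qed.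

Section Dissection3.
Local Open Scope ring_scope.

Lemma coef_pentser_dissect3 b m : (72 * m + 3 < b ^ 2)%N ->
  (pentser b 1 * pentser b 2)`_(3 * m) = (pentser b 1)`_m.
Proof.
move=> hb; rewrite /pentser mul_sum_Xn !coef_sum_XnF2; congr (_%:R).
set M := (72 * m + 3)%N.
have -> : [set z : 'I_b * 'I_b | coprime z.1 6 && coprime z.2 6 &
    (1 * gpent z.1 + 2 * gpent z.2 == 3 * m)%N] = [set z : 'I_b * 'I_b | rep2 M z.1 z.2].
  apply/setP => z; rewrite !inE /rep2 -andbA.
  case: (boolP (coprime _ _)) => //= c1; case: (boolP (coprime _ _)) => //= c2.
  by rewrite (sqr_coprime6 c1) (sqr_coprime6 c2); apply/eqP/eqP; lia.
rewrite (@odd_card_involution_ord2 b (rep2 M) flip2); last first.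
  by move=> x y hxy; have [hr hK] := flip2_rep2 hxy; have [] := rep2_bound hb hr.
have -> : [set z : 'I_b * 'I_b | rep2 M z.1 z.2 && (flip2 z.1 z.2 == (val z.1, val z.2))]
    = (fun x => (x, x)) @: [set x : 'I_b | coprime x 6 & (1 * gpent x == m)%N].
  apply/setP => -[x y]; rewrite !inE /=; apply/idP/imsetP => [/andP[hr] | [z]].
    have /and3P[cx cy /eqP hM] := hr; move: (cx) (cy); rewrite !coprime6E.
    move=> /andP[ox hx] /andP[_ hy]; rewrite flip2_fix // => /eqP /val_inj exy.
    subst y; exists x => //; rewrite inE cx /=; apply/eqP.
    by have := sqr_coprime6 cx; rewrite /M in hM; lia.
  rewrite inE => /andP[cz /eqP hz] [-> ->]; move: (cz); rewrite coprime6E => /andP[oz tz].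
  rewrite /rep2 cz flip2_fix // eqxx !andbT /M; apply/eqP.
  by have := sqr_coprime6 cz; lia.
by rewrite card_imset // => x y [].
Qed.

End Dissection3.

(* Up to signs, multiplication of (x + y sqrt(-3))/2 by the unit
   (1 -+ sqrt(-3))/2, the sign being chosen so that 3 does not divide y. *)
Definition flip1 x y :=
  if 3 %| x + y then ((x + 3 * y) %/ 2, `|x - y| %/ 2)
  else (`|x - 3 * y| %/ 2, (x + y) %/ 2).

Lemma flip1E x y : odd x = odd y ->
  if 3 %| x + y then 2 * (flip1 x y).1 = x + 3 * y /\ 2 * (flip1 x y).2 = `|x - y|
  else 2 * (flip1 x y).1 = `|x - 3 * y| /\ 2 * (flip1 x y).2 = x + y.
Proof. by move=> o; case: ifP => d; rewrite /flip1 d /=; split; lia. Qed.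

Lemma flip1_norm x y : odd x = odd y ->
  (flip1 x y).1 ^ 2 + 3 * (flip1 x y).2 ^ 2 = x ^ 2 + 3 * y ^ 2.
Proof. by move=> o; have := flip1E o; case: ifP => _ [] /=; nia. Qed.

Lemma flip1_eq x y u v : odd x = odd y ->
  (if 3 %| x + y then 2 * u = x + 3 * y /\ 2 * v = `|x - y|
   else 2 * u = `|x - 3 * y| /\ 2 * v = x + y) -> flip1 x y = (u, v).
Proof.
move=> o; have := flip1E o; case: (flip1 x y) => a b /=.
by case: ifP => _ [ea eb] [eu ev]; congr pair; lia.
Qed.

Lemma flip1K x y : odd x = odd y -> ~~ (3 %| x) -> ~~ (3 %| y) ->
  flip1 (flip1 x y).1 (flip1 x y).2 = (x, y).
Proof.
move=> o hx hy; case: (boolP (3 %| x + y)) => d.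
- case: (leqP y x) => c.
  + have [k ek] : exists k, x = y + 2 * k by exists ((x - y) %/ 2); lia.
    rewrite (@flip1_eq x y (2 * y + k) k) //= ?d; last by split; lia.
    by apply: flip1_eq; [lia | rewrite ifT; [split | ]; lia].
  + have [k ek] : exists k, y = x + 2 * k by exists ((y - x) %/ 2); lia.
    rewrite (@flip1_eq x y (2 * x + 3 * k) k) //= ?d; last by split; lia.
    by apply: flip1_eq; [lia | rewrite ifF; [split | ]; lia].
- case: (leqP (3 * y) x) => c.
  + have [k ek] : exists k, x = 3 * y + 2 * k by exists ((x - 3 * y) %/ 2); lia.
    rewrite (@flip1_eq x y k (2 * y + k)) //= ?(negbTE d); last by split; lia.
    by apply: flip1_eq; [lia | rewrite ifT; [split | ]; lia].
  + have [k ek] : exists k, 3 * y = x + 2 * k by exists ((3 * y - x) %/ 2); lia.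
    rewrite (@flip1_eq x y k (2 * y - k)) //= ?(negbTE d); last by split; lia.
    by apply: flip1_eq; [lia | rewrite ifF; [split | ]; lia].
Qed.

Definition rep3 K x y := [&& odd x == odd y, ~~ (3 %| y) & x ^ 2 + 3 * y ^ 2 == 4 * K].

Lemma rep3_coprime3 m x y : rep3 (24 * m + 7) x y -> ~~ (3 %| x).
Proof.
by move=> /and3P[_ _ /eqP h]; have := sqr_mod3 x; case: (3 %| x) => /=; lia.
Qed.

Lemma flip1_rep3 m x y : rep3 (24 * m + 7) x y ->
  rep3 (24 * m + 7) (flip1 x y).1 (flip1 x y).2 /\ flip1 (flip1 x y).1 (flip1 x y).2 = (x, y).
Proof.
move=> hr; have hx := rep3_coprime3 hr; move: hr => /and3P[/eqP o hy /eqP hM].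
split; last exact: flip1K.
rewrite /rep3 flip1_norm // hM eqxx andbT.
by have := flip1E o; case: (flip1 x y) => u v /=; case: ifP => d [eu ev]; apply/andP; split; lia.
Qed.

Lemma flip1_neq m x y : rep3 (24 * m + 7) x y -> flip1 x y != (x, y).
Proof.
move=> hr; have hx := rep3_coprime3 hr; move: hr => /and3P[/eqP o hy /eqP hM].
have := flip1E o; case: (flip1 x y) => u v /=.
case: ifP => d [eu ev]; apply/eqP => -[eux evy]; subst u v.
  have exy : x = 3 * y by lia.
  by subst x; move: hM; rewrite expnMn; lia.
have exy : x = y by lia.
by subst x; move: hM (sqr_mod8 y); case: (odd y); case: (y %% 4 == 2) => /=; lia.
Qed.

Lemma rep3_odd m x y : odd x ->
  rep3 (24 * m + 7) x y = [&& coprime x 6, coprime y 6 & gpent x + 3 * gpent y == 4 * m + 1].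
Proof.
move=> ox; apply/idP/idP => [hr | /and3P[cx cy /eqP h]].
  have hx := rep3_coprime3 hr; move: hr => /and3P[/eqP o hy /eqP hM].
  have cx : coprime x 6 by rewrite coprime6E ox hx.
  have cy : coprime y 6 by rewrite coprime6E -o ox hy.
  by rewrite cx cy /=; move: hM (sqr_coprime6 cx) (sqr_coprime6 cy); lia.
move: (sqr_coprime6 cx) (sqr_coprime6 cy) => ex ey.
move: cx cy; rewrite !coprime6E => /andP[ox' _] /andP[oy hy].
by rewrite /rep3 ox' oy hy /=; apply/eqP; lia.
Qed.

Lemma rep3_even m x y : ~~ odd x -> rep3 (24 * m + 7) x y <->
  exists u v, [/\ x = 4 * v, y = 2 * u, coprime u 6, coprime v 6 & 3 * gpent u + 4 * gpent v = m].
Proof.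
move=> ex; split => [hr | [u [v [-> -> cu cv h]]]]; last first.
  move: (sqr_coprime6 cu) (sqr_coprime6 cv) => eu ev.
  move: cu; rewrite coprime6E => /andP[_ hu].
  by rewrite /rep3 !oddM /= !expnMn; apply/andP; split; lia.
have hx := rep3_coprime3 hr; move: hr => /and3P[/eqP o hy /eqP hM].
have [a ha] : exists a, x = 2 * a by exists (x %/ 2); lia.
have [c hc] : exists c, y = 2 * c by exists (y %/ 2); lia.
subst x y; have {hM} hK : a ^ 2 + 3 * c ^ 2 = 24 * m + 7 by move: hM; rewrite !expnMn; lia.
have [oc a4] : odd c /\ a %% 4 = 2.
  move: hK (sqr_mod8 a) (sqr_mod8 c).
  by case: (odd a) (odd c) => [] []; case: (a %% 4 =P 2) => [a4|a4]; case: (c %% 4 == 2) => /=; lia.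
have [v hv] : exists v, a = 2 * v by exists (a %/ 2); lia.
subst a; exists c, v.
have cc : coprime c 6 by rewrite coprime6E oc /=; lia.
have cv : coprime v 6 by rewrite coprime6E; apply/andP; split; lia.
split => //; first by lia.
by move: hK (sqr_coprime6 cc) (sqr_coprime6 cv); rewrite expnMn; lia.
Qed.

Lemma rep3_bound b m x y : (4 * (24 * m + 7) < b ^ 2)%N -> rep3 (24 * m + 7) x y ->
  (x < b)%N /\ (y < b)%N.
Proof. by move=> hb /and3P[_ _ /eqP h]; split; rewrite -(@ltn_exp2r _ _ 2) //; lia. Qed.

Lemma card_rep3_even b m : (4 * (24 * m + 7) < b ^ 2)%N ->
  #|[set z : 'I_b * 'I_b | coprime z.1 6 && coprime z.2 6 & 3 * gpent z.1 + 4 * gpent z.2 == m]|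
  = #|[set z : 'I_b * 'I_b | rep3 (24 * m + 7) z.1 z.2 & ~~ odd z.1]|.
Proof.
case: b => [|b] hb; first by lia.
pose f (z : 'I_b.+1 * 'I_b.+1) : 'I_b.+1 * 'I_b.+1 := (inord (4 * z.2), inord (2 * z.1)).
have rep3_f u v : coprime u 6 -> coprime v 6 -> 3 * gpent u + 4 * gpent v = m ->
    rep3 (24 * m + 7) (4 * v) (2 * u).
  by move=> cu cv h; apply/rep3_even; [rewrite oddM | exists u, v].
have fE (z : 'I_b.+1 * 'I_b.+1) : coprime z.1 6 -> coprime z.2 6 ->
    3 * gpent z.1 + 4 * gpent z.2 = m -> val (f z).1 = 4 * z.2 /\ val (f z).2 = 2 * z.1.
  move=> cu cv h; have [] := rep3_bound hb (rep3_f _ _ cu cv h).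
  by rewrite /f /= => h1 h2; rewrite !inordK.
rewrite -(card_in_imset (f := f)) => [|z z']; last first.
  rewrite !inE => /andP[/andP[cu cv] /eqP h] /andP[/andP[cu' cv'] /eqP h'] ezz'.
  have [e1 e2] := fE z cu cv h; have [e1' e2'] := fE z' cu' cv' h'.
  move: e1 e2 e1' e2'; rewrite ezz' => -> -> e1 e2.
  case: z z' {cu cv h cu' cv' h' ezz'} e1 e2 => [? ?] [? ?] /= e1 e2.
  by congr pair; apply: ord_inj; lia.
apply: eq_card => w; apply/imsetP/idP => [[z] | ].
  rewrite !inE => /andP[/andP[cu cv] /eqP h] ->; have [e1 e2] := fE z cu cv h.
  by rewrite e1 e2 rep3_f //= oddM.
case: w => w1 w2; rewrite inE /= => /andP[hr ew].
have [u [v [ex ey cu cv h]]] := (rep3_even _ _ ew).1 hr.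
have [hu hv] : (u < b.+1) /\ (v < b.+1) by move: (ltn_ord w1) (ltn_ord w2); lia.
exists (inord u, inord v); first by rewrite inE /= !inordK // cu cv h eqxx.
by rewrite /f /= !inordK // -ex -ey !inord_val.
Qed.

Section Dissection4.
Local Open Scope ring_scope.

Lemma coef_pentser_dissect4 b m : (4 * (24 * m + 7) < b ^ 2)%N ->
  (pentser b 1 * pentser b 3)`_(4 * m + 1) = (pentser b 3 * pentser b 4)`_m.
Proof.
move=> hb; rewrite /pentser !mul_sum_Xn !coef_sum_XnF2 card_rep3_even //; congr (_%:R).
set K := (24 * m + 7)%N; set W := [set z : 'I_b * 'I_b | rep3 K z.1 z.2].
set Od := [set z : 'I_b * 'I_b | odd z.1].
have odd_W : ~~ odd #|W|.
  rewrite (@odd_card_involution_ord2 b (rep3 K) flip1) => [|x y hr]; last first.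
    by have [hr' hK] := flip1_rep3 hr; have [] := rep3_bound hb hr'.
  rewrite (_ : [set _ | _] = set0) ?cards0 //; apply/setP => z; rewrite !inE.
  by case: (boolP (rep3 K _ _)) => //= /flip1_neq /negbTE.
have -> : [set z : 'I_b * 'I_b | coprime z.1 6 && coprime z.2 6 &
    (1 * gpent z.1 + 3 * gpent z.2 == 4 * m + 1)%N] = W :&: Od.
  apply/setP => -[x y]; rewrite !inE /= mul1n.
  case: (boolP (odd x)) => ox; first by rewrite andbT rep3_odd // andbA.
  by rewrite andbF coprime6E (negbTE ox).
have -> : [set z : 'I_b * 'I_b | rep3 K z.1 z.2 & ~~ odd z.1] = W :\: Od.
  by apply/setP => z; rewrite !inE andbC.
move: odd_W; rewrite -(cardsID Od W) oddD.
by case: (odd #|W :&: Od|); case: (odd #|W :\: Od|).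
Qed.

End Dissection4.

Section Mod2Reduction.
Local Open Scope ring_scope.

Definition trunc_mod2 N (s : nat -> int) : {poly 'F_2} := \poly_(i < N) (s i)%:~R.

Lemma coef_trunc_mod2 N s i : (i < N)%N -> (trunc_mod2 N s)`_i = (s i)%:~R.
Proof. by move=> h; rewrite coef_poly h. Qed.

Lemma trunc_mod2_smul N s t :
  eqmodXn N (trunc_mod2 N (smul s t)) (trunc_mod2 N s * trunc_mod2 N t).
Proof.
move=> i hi; rewrite coef_trunc_mod2 // coefM /smul rmorph_sum; apply: eq_bigr => j _.
by rewrite rmorphM !coef_trunc_mod2 //; apply: leq_ltn_trans hi; rewrite ?leq_subr // -ltnS.
Qed.

Lemma eqmodXn_trunc_mod2_smul N s t p q :
  eqmodXn N (trunc_mod2 N s) p -> eqmodXn N (trunc_mod2 N t) q ->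
  eqmodXn N (trunc_mod2 N (smul s t)) (p * q).
Proof. by move=> hs ht; apply: eqmodXn_trans (trunc_mod2_smul s t) (eqmodXnM hs ht). Qed.

Definition frF2 N r : {poly 'F_2} := \prod_(k < N) (1 - 'X^(r * k.+1)).

Lemma coef_frF2 r i j : (0 < r)%N -> (i < j)%N -> (frF2 j r)`_i = (frF2 i.+1 r)`_i.
Proof.
move=> hr; elim: j => // j IH; rewrite ltnS leq_eqVlt => /orP[/eqP -> // | hij].
by rewrite /frF2 big_ord_recr /= coefM_1subXn ?IH //; nia.
Qed.

Lemma trunc_mod2_fr N r : (0 < r)%N -> eqmodXn N (trunc_mod2 N (fr r)) (frF2 N r).
Proof.
move=> hr i hi; rewrite coef_trunc_mod2 // (@coef_frF2 r i N) // /fr -coef_map rmorph_prod.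
apply: (congr1 (fun p : {poly 'F_2} => p`_i)); apply: eq_bigr => k _.
by rewrite rmorphB rmorph1 rmorphXn /= map_polyX.
Qed.

Lemma frF2_sqr N r : frF2 N r ^+ 2 = frF2 N (2 * r).
Proof.
rewrite /frF2 -prodrXl; apply: eq_bigr => k _.
rewrite -(pFrobenius_autE pchar2_polyF2) (pFrobenius_autB_comm _ (esym (commr1 _))) pFrobenius_aut1.
by rewrite pFrobenius_autE -exprM; congr (_ - 'X^_); lia.
Qed.

Lemma frF2_comp N r : frF2 N r = frF2 N 1 \Po 'X^r.
Proof.
rewrite /frF2 rmorph_prod; apply: eq_bigr => k _.
by rewrite rmorphB rmorph1 rmorphXn /= comp_polyX -exprM mul1n.
Qed.

Lemma coef0_frF2 N r : (0 < r)%N -> (frF2 N r)`_0 = 1.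
Proof.
move=> hr; rewrite /frF2 coef0_prod; apply: big1 => k _.
by rewrite coefB coef1 coefXn /= (_ : (0 == r * k.+1)%N = false) ?subr0 //; lia.
Qed.

Lemma pentser_comp B r : pentser B r = pentser B 1 \Po 'X^r.
Proof.
rewrite /pentser rmorph_sum; apply: eq_bigr => k _.
by rewrite rmorphXn /= comp_polyX -exprM mul1n.
Qed.

Lemma pentser_sqr B r : pentser B r ^+ 2 = pentser B (2 * r).
Proof.
rewrite /pentser -(pFrobenius_autE pchar2_polyF2) rmorph_sum; apply: eq_bigr => k _.
by rewrite [LHS](pFrobenius_autE pchar2_polyF2) -exprM mulnC mulnA.
Qed.

Lemma frF2_pentser N r : (0 < r)%N -> eqmodXn N (frF2 N r) (pentser (6 * N + 2) r).
Proof.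
move=> hr; rewrite frF2_comp pentser_comp; apply: eqmodXn_comp => //.
apply: eqmodXnW (leqnSn N) _ => i hi; rewrite -euler_pentagonalF2 // /frF2.
by under eq_bigr do rewrite mul1n.
Qed.

Lemma coef_pentser2_odd B k : odd k -> (pentser B 2)`_k = 0.
Proof.
move=> ok; rewrite /pentser coef_sum_XnF2 (_ : [set _ | _] = set0) ?cards0 //.
by apply/setP => x; rewrite !inE; apply/negbTE; rewrite negb_and; apply/orP; right; lia.
Qed.

Lemma coef_pentser_dissect3_cube B k : (72 * k + 3 < B ^ 2)%N ->
  (pentser B 3 * pentser B 1 ^+ 3)`_(3 * k) = (pentser B 2)`_k.
Proof.
move=> hB; have E2 : pentser B 1 ^+ 2 = pentser B 2 by rewrite pentser_sqr.
rewrite (exprS _ 2) E2 (pentser_comp B 3) mulrC -[(3 * k)%N]addn0 coefM_comp_Xn //.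
rewrite -[in RHS]E2 expr2 !coefM; apply: eq_bigr => j _.
by rewrite coef_dissect // addn0 coef_pentser_dissect3 //; have := ltn_ord j; nia.
Qed.

End Mod2Reduction.

Section Congruences.
Local Open Scope ring_scope.
Variable a : nat -> int.
Hypothesis Ha : forall n,
  smul (smul a (smul (fr 2) (fr 2))) (fr 3) n = smul (fr 1) (fr 6) n.

Lemma trunc_mod2_hyp N : eqmodXn N
  (trunc_mod2 N a * (frF2 N 1 ^+ 2 * frF2 N 1 ^+ 2) * frF2 N 3) (frF2 N 1 * frF2 N 3 ^+ 2).
Proof.
have fr_mod2 r : (0 < r)%N -> eqmodXn N (trunc_mod2 N (fr r)) (frF2 N r).
  exact: trunc_mod2_fr.
have lhs : eqmodXn N (trunc_mod2 N (smul (smul a (smul (fr 2) (fr 2))) (fr 3)))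
    (trunc_mod2 N a * (frF2 N 2 * frF2 N 2) * frF2 N 3).
  apply: (eqmodXn_trunc_mod2_smul _ (fr_mod2 3%N isT)).
  apply: eqmodXn_trunc_mod2_smul; first exact: eqmodXn_refl.
  exact: eqmodXn_trunc_mod2_smul (fr_mod2 2%N isT) (fr_mod2 2%N isT).
have rhs : eqmodXn N (trunc_mod2 N (smul (fr 1) (fr 6))) (frF2 N 1 * frF2 N 6).
  exact: eqmodXn_trunc_mod2_smul (fr_mod2 1%N isT) (fr_mod2 6%N isT).
rewrite !frF2_sqr; apply: eqmodXn_trans (eqmodXn_sym lhs) _.
by move=> i hi; rewrite -rhs // !coef_trunc_mod2 // Ha.
Qed.

Lemma trunc_mod2_relation N :
  eqmodXn N (trunc_mod2 N a * frF2 N 4) (frF2 N 1 * frF2 N 3).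
Proof.
have hT := @trunc_mod2_hyp N.
have f13_0 : (frF2 N 1 * frF2 N 3)`_0 = 1 by rewrite coef0M !coef0_frF2 // mulr1.
rewrite (_ : 4 = 2 * (2 * 1))%N // -!frF2_sqr -exprM.
move: hT f13_0; set a2 := trunc_mod2 N a; set f1 := frF2 N 1; set f3 := frF2 N 3.
clearbody a2 f1 f3 => hT f13_0.
have ha : eqmodXn N (a2 * f1 ^+ 3) f3.
  apply: (eqmodXn_mul2r f13_0).
  have -> : a2 * f1 ^+ 3 * (f1 * f3) = a2 * (f1 ^+ 2 * f1 ^+ 2) * f3 by ring.
  by have -> : f3 * (f1 * f3) = f1 * f3 ^+ 2 by ring.
have -> : a2 * f1 ^+ (2 * 2) = a2 * f1 ^+ 3 * f1 by ring.
by rewrite [f1 * f3]mulrC; exact: eqmodXnM ha (eqmodXn_refl f1).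
Qed.

Lemma trunc_mod2_pentser N (B := (6 * N + 2)%N) :
  eqmodXn N (trunc_mod2 N a * pentser B 4) (pentser B 1 * pentser B 3).
Proof.
have fE r : (0 < r)%N -> eqmodXn N (frF2 N r) (pentser B r) by exact: frF2_pentser.
move=> i hi; rewrite -(eqmodXnM (fE 1%N isT) (fE 3%N isT)) // -trunc_mod2_relation //.
exact: (eqmodXnM (eqmodXn_refl _) (eqmodXn_sym (fE 4%N isT))) i hi.
Qed.

Lemma dissect4_trunc_mod2 M (N := (4 * M)%N) (B := (6 * N + 2)%N) : (0 < M)%N ->
  eqmodXn M (dissect 4 1 (trunc_mod2 N a)) (pentser B 3 * pentser B 1 ^+ 3).
Proof.
move=> M_gt0; have E0 : (pentser B 1)`_0 = 1.
  by rewrite -frF2_pentser ?coef0_frF2 // /N; lia.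
have E4 : pentser B 1 ^+ 4 = pentser B 4 by rewrite (exprM _ 2 2) !pentser_sqr.
apply: (eqmodXn_mul2r E0) => i hi.
rewrite -coefM_comp_Xn // -pentser_comp trunc_mod2_pentser; last by rewrite /N; lia.
rewrite coef_pentser_dissect4; last by rewrite /B /N; nia.
by rewrite -mulrA -exprSr E4.
Qed.

End Congruences.

Unset Implicit Arguments.

Theorem mainTheorem4 (a : nat -> int) :
  (forall n : nat, smul (smul a (smul (fr 2) (fr 2))) (fr 3) n = smul (fr 1) (fr 6) n) ->
  forall n : nat, (2 %| a (24 * n + 13)%N)%Z.
Proof.
move=> Ha n; set M := (6 * n + 4)%N.
have M_gt0 : (0 < M)%N by lia.
have k_lt : (3 * (2 * n + 1) < M)%N by lia.
have := dissect4_trunc_mod2 Ha M_gt0 k_lt.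
rewrite coef_dissect // coef_trunc_mod2; last by lia.
rewrite coef_pentser_dissect3_cube; last by nia.
rewrite coef_pentser2_odd; last by lia.
by rewrite (_ : (4 * (3 * (2 * n + 1)) + 1 = 24 * n + 13)%N) => [/intrF2_eq0 | ]; last lia.
Qed.
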